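(* Let $A\bowtie^{\theta} I$ be an amalgamated Banach algebra as in the context. If $A\bowtie^{\theta} I$ is weakly amenable, then $A$ is weakly amenable.
   Context: Let $A$ and $B$ be Banach algebras, $\theta:A\to B$ a continuous algebra homomorphism with $\|\theta\|\le 1$, and $I$ a closed two-sided ideal of $B$. The amalgamated Banach algebra $A\bowtie^{\theta} I$ is the Banach space $\{(a,i): a\in A,\ i\in I\}$ with norm $\|(a,i)\|=\|a\|+\|i\|$ and product $(a,i)\cdot(a',i')=(aa',\ \theta(a)i'+i\theta(a')+ii')$. A Banach algebra $C$ is weakly amenable if every bounded derivation $D:C\to C^*$ (i.e. bounded linear with $D(ab)=a\cdot D(b)+D(a)\cdot b$, where $\langle a\cdot f,b\rangle=f(ba)$, $\langle f\cdot a,b\rangle=f(ab)$) is inner, i.e. of the form $D(a)=a\cdot f-f\cdot a$ for some $f\in C^*$. *)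

From HB Require Import structures.
From mathcomp Require Import all_boot all_algebra.
From Stdlib Require Import Reals.
Set Implicit Arguments. Unset Strict Implicit. Unset Printing Implicit Defensive.
Import GRing.Theory.
Local Open Scope ring_scope.

Record absval (K : fieldType) := AbsVal {
  av :> K -> R;
  av_ge0 : forall x, Rle R0 (av x);
  av_eq0 : forall x, av x = R0 <-> x = 0;
  avM : forall x y, av (x * y) = Rmult (av x) (av y);
  avD : forall x y, Rle (av (x + y)) (Rplus (av x) (av y)) }.

Record banach_algebra (K : fieldType) (abs : absval K) := BanachAlgebra {
  ba_sort :> lmodType K;
  ba_mul : ba_sort -> ba_sort -> ba_sort;
  ba_norm : ba_sort -> R;
  ba_mulA : forall x y z, ba_mul x (ba_mul y z) = ba_mul (ba_mul x y) z;
  ba_mulDl : forall x y z, ba_mul (x + y) z = ba_mul x z + ba_mul y z;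
  ba_mulDr : forall x y z, ba_mul x (y + z) = ba_mul x y + ba_mul x z;
  ba_mulZl : forall (k : K) x y, ba_mul (k *: x) y = k *: ba_mul x y;
  ba_mulZr : forall (k : K) x y, ba_mul x (k *: y) = k *: ba_mul x y;
  ba_norm_ge0 : forall x, Rle R0 (ba_norm x);
  ba_norm_eq0 : forall x, ba_norm x = R0 <-> x = 0;
  ba_normD : forall x y, Rle (ba_norm (x + y)) (Rplus (ba_norm x) (ba_norm y));
  ba_normZ : forall (k : K) x, ba_norm (k *: x) = Rmult (abs k) (ba_norm x);
  ba_normM : forall x y, Rle (ba_norm (ba_mul x y)) (Rmult (ba_norm x) (ba_norm y));
  ba_complete : forall u : nat -> ba_sort,
    (forall eps, Rlt R0 eps -> exists N : nat, forall m n : nat,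
        leq N m -> leq N n -> Rlt (ba_norm (u m - u n)) eps) ->
    exists l, forall eps, Rlt R0 eps -> exists N : nat, forall n : nat,
        leq N n -> Rlt (ba_norm (u n - l)) eps }.

Arguments ba_mul {K abs} b _ _.
Arguments ba_norm {K abs} b _.

Definition converges K (abs : absval K) (B : banach_algebra abs)
  (u : nat -> B) (l : B) : Prop :=
  forall eps, Rlt R0 eps -> exists N : nat, forall n : nat,
    leq N n -> Rlt (ba_norm B (u n - l)) eps.

Definition alg_hom K (abs : absval K) (A B : banach_algebra abs) (theta : A -> B) :=
  (forall x y, theta (x + y) = theta x + theta y) /\
  (forall (k : K) x, theta (k *: x) = k *: theta x) /\
  (forall x y, theta (ba_mul A x y) = ba_mul B (theta x) (theta y)).

Definition norm_le1 K (abs : absval K) (A B : banach_algebra abs) (theta : A -> B) :=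
  forall x, Rle (ba_norm B (theta x)) (ba_norm A x).

Record closed_ideal K (abs : absval K) (B : banach_algebra abs) := ClosedIdeal {
  ci_mem :> B -> Prop;
  ci_0 : ci_mem 0;
  ci_D : forall x y, ci_mem x -> ci_mem y -> ci_mem (x + y);
  ci_Z : forall (k : K) x, ci_mem x -> ci_mem (k *: x);
  ci_Ml : forall b x, ci_mem x -> ci_mem (ba_mul B b x);
  ci_Mr : forall b x, ci_mem x -> ci_mem (ba_mul B x b);
  ci_closed : forall (u : nat -> B) l, (forall n, ci_mem (u n)) ->
                converges u l -> ci_mem l }.

Section WeakAmenability.
Variables (K : fieldType) (abs : absval K) (T : Type)
  (add : T -> T -> T) (scale : K -> T -> T) (mul : T -> T -> T) (norm : T -> R).

Definition in_dual (f : T -> K) : Prop :=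
  (forall x y, f (add x y) = f x + f y) /\
  (forall k x, f (scale k x) = k * f x) /\
  (exists M, forall x, Rle (abs (f x)) (Rmult M (norm x))).

(* D : T -> T^*, written curried: D a b = <D(a), b>.
   Module actions: <a.f, b> = f(b a), <f.a, b> = f(a b). *)
Definition bounded_derivation (D : T -> T -> K) : Prop :=
  (forall a, in_dual (D a)) /\
  (forall a b c, D (add a b) c = D a c + D b c) /\
  (forall k a c, D (scale k a) c = k * D a c) /\
  (exists M, forall a c, Rle (abs (D a c)) (Rmult M (Rmult (norm a) (norm c)))) /\
  (forall a b c, D (mul a b) c = D b (mul c a) + D a (mul b c)).

Definition inner_derivation (D : T -> T -> K) : Prop :=
  exists f, in_dual f /\ forall a b, D a b = f (mul b a) - f (mul a b).

Definition weakly_amenable_ops : Prop :=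
  forall D, bounded_derivation D -> inner_derivation D.
End WeakAmenability.

Definition weakly_amenable K (abs : absval K) (A : banach_algebra abs) : Prop :=
  weakly_amenable_ops abs (fun x y : A => x + y) (fun k (x : A) => k *: x)
    (ba_mul A) (ba_norm A).

Section Amalgamation.
Variables (K : fieldType) (abs : absval K) (A B : banach_algebra abs)
  (theta : A -> B) (I : closed_ideal B).

Definition amalg : Type := {p : A * B | I p.2}.

Definition amalg_add (x y : amalg) : amalg :=
  exist _ ((proj1_sig x).1 + (proj1_sig y).1, (proj1_sig x).2 + (proj1_sig y).2)
    (ci_D (proj2_sig x) (proj2_sig y)).

Definition amalg_scale (k : K) (x : amalg) : amalg :=
  exist _ (k *: (proj1_sig x).1, k *: (proj1_sig x).2) (ci_Z k (proj2_sig x)).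

Lemma amalg_mul_mem (x y : amalg) :
  I (ba_mul B (theta (proj1_sig x).1) (proj1_sig y).2 + ba_mul B (proj1_sig x).2 (theta (proj1_sig y).1)
     + ba_mul B (proj1_sig x).2 (proj1_sig y).2).
Proof.
have hx := proj2_sig x; have hy := proj2_sig y.
apply: ci_D; first apply: ci_D.
- exact: ci_Ml.
- exact: ci_Mr.
- exact: ci_Ml.
Qed.

Definition amalg_mul (x y : amalg) : amalg :=
  exist _ (ba_mul A (proj1_sig x).1 (proj1_sig y).1,
           ba_mul B (theta (proj1_sig x).1) (proj1_sig y).2 + ba_mul B (proj1_sig x).2 (theta (proj1_sig y).1)
           + ba_mul B (proj1_sig x).2 (proj1_sig y).2) (amalg_mul_mem x y).

Definition amalg_norm (x : amalg) : R :=
  Rplus (ba_norm A (proj1_sig x).1) (ba_norm B (proj1_sig x).2).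

Definition amalg_weakly_amenable : Prop :=
  weakly_amenable_ops abs amalg_add amalg_scale amalg_mul amalg_norm.
End Amalgamation.

(* Weak amenability passes to retracts: if phi : C -> A and sigma : A -> C are
   bounded homomorphisms with phi \o sigma = id and C is weakly amenable, then
   every bounded derivation D of A pulls back along phi to a bounded derivation
   of C, which is inner, implemented by some f; then f \o sigma implements D.
   The amalgamation A ⋈^theta I retracts onto A through (a, i) |-> a and
   a |-> (a, 0), whatever theta is. *)
From mathcomp Require Import all_boot all_algebra.
From Stdlib Require Import Reals Lra ProofIrrelevance.
Set Implicit Arguments.
Import GRing.Theory.
Local Open Scope ring_scope.

Lemma Rmult_le_Rabs (M u v : R) : (0 <= u)%R -> (u <= v)%R -> (M * u <= Rabs M * v)%R.
Proof.
move=> u_ge0 le_uv; apply: Rle_trans (_ : (Rabs M * u <= _)%R).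
- by apply: Rmult_le_compat_r => //; apply: Rle_abs.
- by apply: Rmult_le_compat_l => //; apply: Rabs_pos.
Qed.

Record normed_alg_ops (K : fieldType) := NormedAlgOps {
  nao_sort :> Type;
  nao_add : nao_sort -> nao_sort -> nao_sort;
  nao_scale : K -> nao_sort -> nao_sort;
  nao_mul : nao_sort -> nao_sort -> nao_sort;
  nao_norm : nao_sort -> R }.

Section NormedAlgOps.
Variables (K : fieldType) (abs : absval K).

Definition ops_in_dual {X : normed_alg_ops K} :=
  in_dual abs (nao_add X) (nao_scale X) (nao_norm X).

Definition ops_bounded_derivation {X : normed_alg_ops K} :=
  bounded_derivation abs (nao_add X) (nao_scale X) (nao_mul X) (nao_norm X).

Definition ops_weakly_amenable (X : normed_alg_ops K) :=
  weakly_amenable_ops abs (nao_add X) (nao_scale X) (nao_mul X) (nao_norm X).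

Definition bounded_hom {X Y : normed_alg_ops K} (phi : X -> Y) : Prop :=
  [/\ forall x y, phi (nao_add X x y) = nao_add Y (phi x) (phi y),
      forall k x, phi (nao_scale X k x) = nao_scale Y k (phi x),
      forall x y, phi (nao_mul X x y) = nao_mul Y (phi x) (phi y)
    & exists c, forall x, (nao_norm Y (phi x) <= c * nao_norm X x)%R].

Section Pullback.
Variables (X Y : normed_alg_ops K).
Hypothesis normY_ge0 : forall y : Y, (0 <= nao_norm Y y)%R.

Lemma in_dual_comp (phi : X -> Y) (f : Y -> K) :
  bounded_hom phi -> ops_in_dual f -> ops_in_dual (fun x => f (phi x)).
Proof.
move=> [phiD phiZ _ [c phi_le]] [fD [fZ [M f_le]]]; split; [|split].
- by move=> x y; rewrite phiD fD.
- by move=> k x; rewrite phiZ fZ.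
- exists (Rabs M * c)%R => x; rewrite Rmult_assoc.
  exact: Rle_trans (f_le _) (Rmult_le_Rabs _ (normY_ge0 _) (phi_le x)).
Qed.

Lemma bounded_derivation_comp (phi : X -> Y) (D : Y -> Y -> K) :
  bounded_hom phi -> ops_bounded_derivation D ->
  ops_bounded_derivation (fun x z => D (phi x) (phi z)).
Proof.
move=> phi_hom [D_dual [DD [DZ [[M D_le] D_der]]]].
have [phiD phiZ phiM [c phi_le]] := phi_hom.
split; [|split; [|split; [|split]]].
- by move=> x; apply: (in_dual_comp phi_hom (D_dual (phi x))).
- by move=> a b z; rewrite phiD DD.
- by move=> k a z; rewrite phiZ DZ.
- exists (Rabs M * (c * c))%R => a z.
  have phi_az : (nao_norm Y (phi a) * nao_norm Y (phi z)
                 <= c * nao_norm X a * (c * nao_norm X z))%R.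
    by apply: Rmult_le_compat; rewrite ?phi_le ?normY_ge0.
  apply: Rle_trans (D_le _ _) _.
  have -> : (Rabs M * (c * c) * (nao_norm X a * nao_norm X z)
             = Rabs M * (c * nao_norm X a * (c * nao_norm X z)))%R by ring.
  by apply: Rmult_le_Rabs => //; apply: Rmult_le_pos.
- by move=> a b z; rewrite !phiM D_der.
Qed.

End Pullback.

Lemma weakly_amenable_retract (X Y : normed_alg_ops K) (phi : X -> Y) (sigma : Y -> X) :
  (forall x : X, (0 <= nao_norm X x)%R) -> (forall y : Y, (0 <= nao_norm Y y)%R) ->
  bounded_hom phi -> bounded_hom sigma -> (forall y, phi (sigma y) = y) ->
  ops_weakly_amenable X -> ops_weakly_amenable Y.
Proof.
move=> normX_ge0 normY_ge0 phi_hom sigma_hom phiK wa_X D D_der.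
have [f [f_dual f_inner]] :=
  wa_X _ (bounded_derivation_comp normY_ge0 phi_hom D_der).
exists (fun y => f (sigma y)); split.
  exact: (in_dual_comp normX_ge0 sigma_hom f_dual).
have [_ _ sigmaM _] := sigma_hom.
by move=> a b; rewrite !sigmaM -f_inner !phiK.
Qed.

End NormedAlgOps.

Lemma ba_mul0r K (abs : absval K) (A : banach_algebra abs) (x : A) :
  ba_mul A 0 x = 0.
Proof.
by apply: (addIr (ba_mul A 0 x)); rewrite -ba_mulDl !add0r.
Qed.

Lemma ba_mulr0 K (abs : absval K) (A : banach_algebra abs) (x : A) :
  ba_mul A x 0 = 0.
Proof.
by apply: (addIr (ba_mul A x 0)); rewrite -ba_mulDr !add0r.
Qed.

Section AmalgRetract.
Variables (K : fieldType) (abs : absval K) (A B : banach_algebra abs)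
  (theta : A -> B) (I : closed_ideal B).

Definition ba_ops : normed_alg_ops K :=
  @NormedAlgOps K _ (fun x y : A => x + y) (fun k (x : A) => k *: x)
    (ba_mul A) (ba_norm A).

Definition amalg_ops : normed_alg_ops K :=
  @NormedAlgOps K _ (@amalg_add K abs A B I) (@amalg_scale K abs A B I)
    (@amalg_mul K abs A B theta I) (@amalg_norm K abs A B I).

Definition amalg_fst (x : amalg A I) : A := (proj1_sig x).1.

Definition amalg_inl (a : A) : amalg A I := exist _ (a, 0) (ci_0 I).

Lemma amalg_norm_ge0 (x : amalg A I) : (0 <= amalg_norm x)%R.
Proof. by apply: Rplus_le_le_0_compat; apply: ba_norm_ge0. Qed.

Lemma bounded_hom_amalg_fst : bounded_hom (X := amalg_ops) (Y := ba_ops) amalg_fst.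
Proof.
split=> //; exists 1%R => -[[a i] hi] /=.
rewrite /amalg_fst /amalg_norm /=; have := ba_norm_ge0 i; lra.
Qed.

Lemma bounded_hom_amalg_inl : bounded_hom (X := ba_ops) (Y := amalg_ops) amalg_inl.
Proof.
split.
- by move=> a b; apply: subset_eq_compat; rewrite /= addr0.
- by move=> k a; apply: subset_eq_compat; rewrite /= scaler0.
- by move=> a b; apply: subset_eq_compat; rewrite /= !ba_mulr0 !ba_mul0r !addr0.
- exists 1%R => a; rewrite /= /amalg_norm /=.
  by rewrite (proj2 (@ba_norm_eq0 _ _ B 0)) //; lra.
Qed.

End AmalgRetract.

Theorem corollary6p8 (K : fieldType) (abs : absval K)
  (A B : banach_algebra abs) (theta : A -> B) (I : closed_ideal B) :
  alg_hom theta -> norm_le1 theta ->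
  amalg_weakly_amenable theta I -> weakly_amenable A.
Proof.
move=> _ _ wa_amalg.
apply: (weakly_amenable_retract (X := amalg_ops A theta I) (Y := ba_ops A)
          _ _ (bounded_hom_amalg_fst A theta I) (bounded_hom_amalg_inl A theta I)).
- exact: amalg_norm_ge0.
- exact: ba_norm_ge0.
- by [].
- exact: wa_amalg.
Qed.
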